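(* The rules of $\mathbf{LMT}^{\rightarrow}$ are invertible: for each rule, validity of its conclusion implies validity of its premises.
   Context: Formulas are built from atoms using only $\rightarrow$, interpreted in Kripke models $\langle U,\preceq,\mathcal V\rangle$ ($\preceq$ partial order, $\mathcal V$ monotone; $\alpha_1\rightarrow\alpha_2$ forced at $i$ iff for all $j\succeq i$ forcing $\alpha_1$, $\alpha_2$ is forced at $j$). $\Gamma\models\varphi$ means every world of every model forcing all of $\Gamma$ forces $\varphi$. An $\mathbf{LMT}^{\rightarrow}$ sequent has the form $\{\Delta'\},\Upsilon_1^{p_1},\dots,\Upsilon_n^{p_n},\Delta\Rightarrow[p_1,\dots,p_n],\varphi$ with $\Delta,\Upsilon_i$ bags of formulas, $\Upsilon_i^{p_i}$ the formulas of $\Upsilon_i$ labeled by atom $p_i$, $\Delta'\subseteq\Delta$ a set, $p_1,\dots,p_n$ a repetition-free sequence of atoms. Such a sequent is valid iff $\Delta',\Delta\models\varphi$ or there exists $i\in\{1,\dots,n\}$ with $\bigcup_{k=1}^{i}\Upsilon_k^{p_k}\models p_i$ (labels ignored). Write $\overline{\Upsilon}$ for $\Upsilon_1^{p_1},\dots,\Upsilon_n^{p_n}$, $\bar p$ for $p_1,\dots,p_n$, $\Delta^q$ for $\Delta$ labeled by $q$. Rules (with $\Delta'\subseteq\Delta$): Focus: from $\{\Delta',\alpha\},\overline{\Upsilon},\Delta,\alpha\Rightarrow[\bar p],\beta$ infer $\{\Delta'\},\overline{\Upsilon},\Delta,\alpha\Rightarrow[\bar p],\beta$. Restart: from $\{\},\Upsilon_1,\dots,\Upsilon_i,\Upsilon_{i+1}^{p_{i+1}},\dots,\Upsilon_n^{p_n},\Delta^q\Rightarrow[p_1,\dots,p_{i+1},\dots,p_n,q],p_i$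 infer $\{\Delta'\},\Upsilon_1^{p_1},\dots,\Upsilon_n^{p_n},\Delta\Rightarrow[p_1,\dots,p_n],q$. $\rightarrow$-right: from $\{\Delta'\},\overline{\Upsilon},\Delta,\alpha\Rightarrow[\bar p],\beta$ infer $\{\Delta'\},\overline{\Upsilon},\Delta\Rightarrow[\bar p],\alpha\rightarrow\beta$. $\rightarrow$-left: from $\{\alpha\rightarrow\beta,\Delta'\},\overline{\Upsilon},\Delta^q,\Delta\Rightarrow[\bar p,q],\alpha$ and $\{\alpha\rightarrow\beta,\Delta'\},\overline{\Upsilon},\Delta,\beta\Rightarrow[\bar p],q$ infer $\{\alpha\rightarrow\beta,\Delta'\},\overline{\Upsilon},\Delta\Rightarrow[\bar p],q$. The axiom is $\{\Delta',q\},\overline{\Upsilon},\Delta\Rightarrow[\bar p],q$. *)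

From Stdlib Require Import List.
Import ListNotations.

Inductive form : Type :=
| Atom : nat -> form
| Imp : form -> form -> form.

Record kmodel : Type := {
  kW :> Type;
  kle : kW -> kW -> Prop;
  kle_refl : forall w, kle w w;
  kle_trans : forall u v w, kle u v -> kle v w -> kle u w;
  kle_antisym : forall u v, kle u v -> kle v u -> u = v;
  kval : kW -> nat -> Prop;
  kval_mono : forall u v p, kle u v -> kval u p -> kval v p
}.

Fixpoint forces (M : kmodel) (w : M) (f : form) : Prop :=
  match f with
  | Atom p => kval M w p
  | Imp a b => forall w' : M, kle M w w' -> forces M w' a -> forces M w' b
  end.

Definition entails (G : list form) (phi : form) : Prop :=
  forall (M : kmodel) (w : M), (forall g, In g G -> forces M w g) -> forces M w phi.

(* A sequent {D'}, Y_1^{p_1},...,Y_n^{p_n}, D => [p_1,...,p_n], phi.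
   [sups] is the list of pairs (Y_k, p_k) (bag Y_k with its label p_k),
   so that the label sequence [p_1,...,p_n] is [map snd sups]. Bags are lists. *)
Record sequent : Type := mkSeq {
  sfoc : list form;
  sups : list (list form * nat);
  sctx : list form;
  sgoal : form
}.

Definition labels (s : sequent) : list nat := map snd (sups s).

(* Validity: D', D |= phi, or for some i (0-based here), the union of
   Y_1..Y_{i+1} (labels ignored) entails the atom p_{i+1}. *)
Definition valid (s : sequent) : Prop :=
  entails (sfoc s ++ sctx s) (sgoal s) \/
  exists i, i < length (sups s) /\
    entails (concat (map fst (firstn (S i) (sups s))))
            (Atom (snd (nth i (sups s) ([], 0)))).

(* Each instance
   requires the side condition D' ⊆ D, and that the label sequences of the
   involved sequents be repetition-free (as required of sequents). *)
Inductive lmt_rule : list sequent -> sequent -> Prop :=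
| r_axiom : forall D' U D q,
    incl (Atom q :: D') D -> NoDup (map snd U) ->
    lmt_rule [] (mkSeq (Atom q :: D') U D (Atom q))
| r_focus : forall D' U D a b,
    incl D' D -> NoDup (map snd U) ->
    lmt_rule [mkSeq (a :: D') U (a :: D) b]
             (mkSeq D' U (a :: D) b)
| r_restart : forall D' U D q i,
    incl D' D -> NoDup (map snd U) -> ~ In q (map snd U) ->
    i < length U ->
    lmt_rule [mkSeq [] (U ++ [(D, q)])
                    (concat (map fst (firstn (S i) U)))
                    (Atom (snd (nth i U ([], 0))))]
             (mkSeq D' U D (Atom q))
| r_impR : forall D' U D a b,
    incl D' D -> NoDup (map snd U) ->
    lmt_rule [mkSeq D' U (a :: D) b]
             (mkSeq D' U D (Imp a b))
| r_impL : forall D' U D a b q,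
    incl (Imp a b :: D') D -> NoDup (map snd U) -> ~ In q (map snd U) ->
    lmt_rule [mkSeq (Imp a b :: D') (U ++ [(D, q)]) D a;
              mkSeq (Imp a b :: D') U (b :: D) (Atom q)]
             (mkSeq (Imp a b :: D') U D (Atom q)).

(* Focus, ->-right and the right premise of ->-left keep the labelled bags
   and only enlarge the left-hand side (for ->-right, Delta |= alpha -> beta
   gives Delta, alpha |= beta by reflexivity of the order), so both disjuncts
   of validity are inherited. Restart and the left premise of ->-left append
   the bag Delta labelled by the old goal q: since Delta' is contained in
   Delta, Delta', Delta |= q makes this last bag entail its label, and an
   earlier bag entailing its label is unaffected by the appended one. *)

From Stdlib Require Import List Lia.
Import ListNotations.

Definition some_label_entailed (U : list (list form * nat)) : Prop :=
  exists i, i < length U /\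
    entails (concat (map fst (firstn (S i) U))) (Atom (snd (nth i U ([], 0)))).

Lemma entails_weaken (G G' : list form) (phi : form) :
  incl G G' -> entails G phi -> entails G' phi.
Proof. intros HGG' H M w Hw. apply H. intros g Hg. apply Hw, HGG', Hg. Qed.

Lemma entails_imp_inv (G : list form) (a b : form) :
  entails G (Imp a b) -> entails (a :: G) b.
Proof.
  intros H M w Hw. apply (H M w).
  - intros g Hg. apply Hw. right. exact Hg.
  - apply kle_refl.
  - apply Hw. left. reflexivity.
Qed.

Lemma some_label_entailed_app (U X : list (list form * nat)) :
  some_label_entailed U -> some_label_entailed (U ++ X).
Proof.
  intros [i [Hi H]]. exists i. split.
  - rewrite length_app. lia.
  - rewrite firstn_app, app_nth1 by lia.
    replace (S i - length U) with 0 by lia.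
    rewrite firstn_O, app_nil_r. exact H.
Qed.

Lemma some_label_entailed_last (U : list (list form * nat)) (D : list form) (q : nat) :
  entails (concat (map fst U) ++ D) (Atom q) -> some_label_entailed (U ++ [(D, q)]).
Proof.
  intros H. exists (length U). split.
  - rewrite length_app. simpl. lia.
  - rewrite firstn_all2 by (rewrite length_app; simpl; lia).
    rewrite app_nth2 by lia. replace (length U - length U) with 0 by lia.
    rewrite map_app, concat_app. simpl. rewrite app_nil_r. exact H.
Qed.

Lemma valid_mono (s s' : sequent) :
  sups s = sups s' ->
  (entails (sfoc s ++ sctx s) (sgoal s) -> entails (sfoc s' ++ sctx s') (sgoal s')) ->
  valid s -> valid s'.
Proof.
  unfold valid. intros Hsups Hent [H|H].
  - left. exact (Hent H).
  - right. rewrite <- Hsups. exact H.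
Qed.

Lemma valid_push_goal (D' D D'' G : list form) (U : list (list form * nat))
    (q : nat) (phi : form) :
  incl D' D -> valid (mkSeq D' U D (Atom q)) ->
  valid (mkSeq D'' (U ++ [(D, q)]) G phi).
Proof.
  unfold valid; simpl. intros HD' [H|H]; right.
  - apply some_label_entailed_last. revert H. apply entails_weaken.
    apply incl_app; apply incl_appr; [exact HD' | apply incl_refl].
  - exact (some_label_entailed_app U _ H).
Qed.

Theorem lemma3 :
  forall (prems : list sequent) (concl : sequent),
    lmt_rule prems concl -> valid concl ->
    forall s, In s prems -> valid s.
Proof.
  intros prems concl Hrule Hvalid s Hs.
  destruct Hrule as [| D' U D a b HD' _ | D' U D q i HD' _ _ _
                     | D' U D a b HD' _ | D' U D a b q HD' _ _];
    simpl in Hs; decompose sum Hs; subst s; clear Hs.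
  - revert Hvalid. apply valid_mono; [reflexivity |]. apply entails_weaken.
    intros f. simpl. rewrite !in_app_iff. simpl. tauto.
  - exact (valid_push_goal _ _ _ _ _ _ _ HD' Hvalid).
  - revert Hvalid. apply valid_mono; [reflexivity |]. simpl. intros Himp.
    apply entails_imp_inv in Himp. revert Himp. apply entails_weaken.
    intros f. simpl. rewrite !in_app_iff. simpl. tauto.
  - exact (valid_push_goal _ _ _ _ _ _ _ HD' Hvalid).
  - revert Hvalid. apply valid_mono; [reflexivity |]. apply entails_weaken.
    intros f. simpl. rewrite !in_app_iff. simpl. tauto.
Qed.
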